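(* Let $G=(V,E)$ be a finite connected directed graph with $(i,j)\in E$ if and only if $(j,i)\in E$, and write $\partial i=\{j\in V:(j,i)\in E\}$. Let $f=(f_{ij})_{(i,j)\in E}$ with each $f_{ij}:\mathbb{R}\to\mathbb{R}$ continuous and strictly increasing and $f_{ij}(x)=-f_{ji}(-x)$. Let $(\phi,\pi)$ and $(\phi^*,\pi^* )$, with $\phi,\phi^*:E\to\mathbb{R}$ skew-symmetric and $\pi,\pi^*:V\to\mathbb{R}$, satisfy $\sum_{j\in\partial i}\phi_{ji}+q_i=0$, $\sum_{j\in\partial i}\phi^*_{ji}+q^*_i=0$ for all $i\in V$, and $\pi_j-\pi_i=-f_{ij}(\phi_{ij})$, $\pi^*_j-\pi^*_i=-f_{ij}(\phi^*_{ij})$ for all $(i,j)\in E$, for productions $q,q^*:V\to\mathbb{R}$. Let $T\subset V$ be non-empty. If $\pi_t\ge\pi_t^*$ for all $t\in T$ and $q_i\ge q_i^*$ for all $i\in V\setminus T$, then $\pi_u\ge\pi_u^*$ for every $u\in V\setminus T$. Moreover, if $q_u>q_u^*$, then $\pi_u>\pi_u^*$. *)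

From HB Require Import structures.
From mathcomp Require Import all_boot all_order all_algebra.
From mathcomp Require Import all_classical all_reals all_analysis.
Set Implicit Arguments. Unset Strict Implicit. Unset Printing Implicit Defensive.
Import Order.TTheory GRing.Theory Num.Theory numFieldNormedType.Exports.
Local Open Scope ring_scope.

Definition sym_edges (V : finType) (e : rel V) : Prop :=
  forall i j : V, e i j = e j i.

Definition graph_connected (V : finType) (e : rel V) : Prop :=
  forall i j : V, connect e i j.

Definition admissible_f (R : realType) (V : finType) (e : rel V)
  (f : V -> V -> R -> R) : Prop :=
  forall i j : V, e i j ->
    [/\ continuous (f i j),
        {homo f i j : x y / x < y}
      & forall x : R, f i j x = - f j i (- x)].

Definition skew_flow (R : realType) (V : finType) (e : rel V)
  (phi : V -> V -> R) : Prop :=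
  forall i j : V, e i j -> phi i j = - phi j i.

Definition network_solution (R : realType) (V : finType) (e : rel V)
  (f : V -> V -> R -> R) (q : V -> R) (phi : V -> V -> R) (pi : V -> R) : Prop :=
  skew_flow e phi /\
  (forall i : V, \sum_(j | e j i) phi j i + q i = 0) /\
  (forall i j : V, e i j -> pi j - pi i = - f i j (phi i j)).

From HB Require Import structures.
From mathcomp Require Import all_boot all_order all_algebra.
From mathcomp Require Import all_classical all_reals all_analysis.
From mathcomp Require Import ring lra.
Import Order.TTheory GRing.Theory Num.Theory numFieldNormedType.Exports.
Local Open Scope ring_scope.

(* Put d := pi - pi* and g := phi - phi*. Since each f_ij is strictly
   increasing, g flows from larger to smaller values of d, and g is a skew
   flow whose net inflow q* - q is nonpositive off T. If d attained its
   minimum only off T, the set A of minimisers would be left by some edge;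
   inside A the skew flow cancels, so the net inflow into A equals the flow
   entering A across its boundary, which is strictly positive: a contradiction.
   Hence min d is attained on T, where d >= 0. At a vertex u with d u = 0 all
   inflows are nonnegative, which forces q* u >= q u. *)

Lemma connect_exit {V : finType} {e : rel V} {A : {set V}} {x y : V} :
  connect e x y -> x \in A -> y \notin A ->
  exists i j, [/\ i \in A, j \notin A & e i j].
Proof.
move=> /connectP [p + ->]; elim: p x => [|z p IHp] x /=; first by move=> _ ->.
case/andP=> exz pzp xA yA; case zA: (z \in A).
- exact: IHp pzp zA yA.
- by exists x, z; rewrite zA.
Qed.

Section SkewFlow.

Context {R : numDomainType} {V : finType} {e : rel V} {g : V -> V -> R}.
Hypothesis e_sym : sym_edges e.
Hypothesis g_skew : forall i j, e i j -> g i j = - g j i.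

Lemma sum_inner_flow_eq0 (A : {set V}) :
  \sum_(i in A) \sum_(j in A | e j i) g j i = 0.
Proof.
rewrite (eq_bigr (fun i => \sum_(j in A) (if e j i then g j i else 0)));
  last by move=> i _; rewrite big_mkcondr.
set S := LHS; have S_oppr : S = - S.
  rewrite {1}/S exchange_big /= -sumrN; apply: eq_bigr => i _.
  rewrite -sumrN; apply: eq_bigr => j _; rewrite e_sym.
  by case: ifP => [eji|_]; [rewrite (g_skew _ _ eji) opprK | rewrite oppr0].
have : S *+ 2 = 0 by rewrite mulr2n {2}S_oppr subrr.
by move/eqP; rewrite mulrn_eq0 => /eqP.
Qed.

Lemma sum_inflow_boundary (A : {set V}) :
  \sum_(i in A) \sum_(j | e j i) g j i =
  \sum_(i in A) \sum_(j | (j \notin A) && e j i) g j i.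
Proof.
transitivity (\sum_(i in A) \sum_(j in A | e j i) g j i +
              \sum_(i in A) \sum_(j | (j \notin A) && e j i) g j i).
  rewrite -big_split; apply: eq_bigr => i _; rewrite (bigID (mem A)) /=.
  by congr (_ + _); apply: eq_bigl => j; rewrite andbC.
by rewrite sum_inner_flow_eq0 add0r.
Qed.

End SkewFlow.

Section MinimumPrinciple.

Context {R : realDomainType} {V : finType} {e : rel V}.
Context {g : V -> V -> R} {d : V -> R} {T : {set V}}.
Hypotheses (e_sym : sym_edges e) (e_conn : graph_connected e).
Hypothesis g_skew : forall i j, e i j -> g i j = - g j i.
Hypothesis g_downhill : forall j i, e j i -> d i < d j -> 0 < g j i.
Hypothesis inflow_le0 : forall i, i \notin T -> \sum_(j | e j i) g j i <= 0.

Lemma flow_enters_minimisers (A : {set V}) (m i j : V) :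
  (forall x, (x \in A) = (d x == d m)) -> (forall x, d m <= d x) ->
  i \in A -> j \notin A -> e j i ->
  0 < \sum_(k in A) \sum_(l | (l \notin A) && e l k) g l k.
Proof.
move=> A_min d_min iA jA eji.
have gt_out k l : k \in A -> l \notin A -> e l k -> 0 < g l k.
  move=> kA lA elk; apply: g_downhill => //.
  have /eqP -> : d k == d m by rewrite -A_min.
  by rewrite lt_neqAle d_min andbT eq_sym -A_min.
have out_ge0 k : k \in A -> 0 <= \sum_(l | (l \notin A) && e l k) g l k.
  by move=> kA; apply: sumr_ge0 => l /andP[lA elk]; exact/ltW/gt_out.
rewrite lt0r sumr_ge0 // andbT psumr_neq0 //; apply/hasP; exists i.
  by rewrite mem_index_enum.
rewrite iA /= lt0r out_ge0 // andbT psumr_neq0; last first.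
  by move=> l /andP[lA elk]; exact/ltW/gt_out.
by apply/hasP; exists j; rewrite ?mem_index_enum // jA eji gt_out.
Qed.

Lemma min_attained_in :
  T != finset.set0 -> exists2 t, t \in T & forall v, d t <= d v.
Proof.
case: (set_0Vmem T) => [-> | [t0 t0T] _]; first by rewrite eqxx.
case: (arg_minP d (P := predT) (i0 := t0) isT) => m _ m_min.
have {}m_min v : d m <= d v by exact: m_min.
pose A := [set x | d x == d m].
have A_min x : (x \in A) = (d x == d m) by rewrite inE.
have [/existsP [t /andP[tT]] | AnT] := boolP [exists t, (t \in T) && (t \in A)].
  by rewrite A_min => /eqP dt; exists t => // v; rewrite dt.
have outT x : x \in A -> x \notin T.
  by move=> xA; apply: contra AnT => xT; apply/existsP; exists x; rewrite xT.
have mA : m \in A by rewrite A_min.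
have t0A : t0 \notin A by apply: contraL t0T; exact: outT.
have [i [j [iA jA eij]]] := connect_exit (e_conn m t0) mA t0A.
rewrite e_sym in eij.
have inflow_A_le0 : \sum_(k in A) \sum_(l | e l k) g l k <= 0.
  by apply: sumr_le0 => k /outT; exact: inflow_le0.
have := flow_enters_minimisers _ _ _ _ A_min m_min iA jA eij.
by rewrite -sum_inflow_boundary // ltNge inflow_A_le0.
Qed.

End MinimumPrinciple.

Section EdgeMonotonicity.

Context {R : realDomainType} {h : R -> R} {x y u v u' v' : R}.
Hypotheses (h_incr : {homo h : s t / s < t}).
Hypotheses (hx : v - u = - h x) (hy : v' - u' = - h y).

Lemma potential_gapE : (u - u') - (v - v') = h x - h y.
Proof.
have -> : (u - u') - (v - v') = (v' - u') - (v - u) by ring.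
by rewrite hx hy opprK addrC.
Qed.

Lemma flow_le_gapE : (y <= x) = (v - v' <= u - u').
Proof. by rewrite -[in RHS]subr_ge0 potential_gapE subr_ge0 (le_mono h_incr). Qed.

Lemma flow_lt_gapE : (y < x) = (v - v' < u - u').
Proof.
by rewrite -[in RHS]subr_gt0 potential_gapE subr_gt0 (leW_mono (le_mono h_incr)).
Qed.

End EdgeMonotonicity.

Theorem corollary1 (R : realType) (V : finType) (e : rel V)
  (f : V -> V -> R -> R) (q qs : V -> R)
  (phi phis : V -> V -> R) (pi pis : V -> R) (T : {set V}) :
  sym_edges e -> graph_connected e -> admissible_f e f ->
  network_solution e f q phi pi ->
  network_solution e f qs phis pis ->
  T != finset.set0 ->
  (forall t : V, t \in T -> pis t <= pi t) ->
  (forall i : V, i \notin T -> qs i <= q i) ->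
  forall u : V, u \notin T ->
    pis u <= pi u /\ (qs u < q u -> pis u < pi u).
Proof.
move=> e_sym e_conn f_adm [phi_skew [phi_cons pi_drop]].
move=> [phis_skew [phis_cons pis_drop]] T_neq0 T_le q_ge u uT.
pose d v := pi v - pis v; pose g j i := phi j i - phis j i.
have g_skew i j : e i j -> g i j = - g j i.
  by move=> eij; rewrite /g phi_skew // phis_skew //; ring.
have f_incr j i : e j i -> {homo f j i : s t / s < t} by case/f_adm.
have g_ge0 j i : e j i -> d i <= d j -> 0 <= g j i.
  move=> eji; rewrite subr_ge0.
  by rewrite (flow_le_gapE (f_incr _ _ eji) (pi_drop _ _ eji) (pis_drop _ _ eji)).
have g_gt0 j i : e j i -> d i < d j -> 0 < g j i.
  move=> eji; rewrite subr_gt0.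
  by rewrite (flow_lt_gapE (f_incr _ _ eji) (pi_drop _ _ eji) (pis_drop _ _ eji)).
have inflow_eq i : \sum_(j | e j i) g j i = qs i - q i.
  by rewrite sumrB; have := phi_cons i; have := phis_cons i; lra.
have inflow_le0 i : i \notin T -> \sum_(j | e j i) g j i <= 0.
  by move=> /q_ge; rewrite inflow_eq subr_le0.
have [t tT t_min] := min_attained_in e_sym e_conn g_skew g_gt0 inflow_le0 T_neq0.
have d_ge0 v : 0 <= d v by apply: le_trans (t_min v); rewrite subr_ge0 T_le.
split; first by rewrite -subr_ge0 d_ge0.
move=> q_lt; rewrite -subr_gt0 -/(d u) lt0r d_ge0 andbT; apply/eqP => du0.
have : 0 <= \sum_(j | e j u) g j u.
  by apply: sumr_ge0 => j eju; apply: g_ge0; rewrite // du0 d_ge0.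
by rewrite inflow_eq subr_ge0 leNgt q_lt.
Qed.
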